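(* Let $R$ be a ring and $S$ a multiplicatively closed subset of $R$ consisting of central regular elements. If $R$ is almost Armendariz, then the localization $S^{-1}R=\{u^{-1}a : u\in S, a\in R\}$ is almost Armendariz.
   Context: All rings are associative with identity. An element is regular if it is not a zero divisor (left or right). For a ring $R$, $P(R)$ denotes the prime radical of $R$ (the intersection of all prime ideals of $R$, equivalently the set of strongly nilpotent elements of $R$). A ring $R$ is called almost Armendariz if whenever $f(x)=\sum_{i=0}^m a_ix^i$ and $g(x)=\sum_{j=0}^n b_jx^j\in R[x]$ satisfy $f(x)g(x)=0$, then $a_ib_j\in P(R)$ for all $0\le i\le m$, $0\le j\le n$. *)

From HB Require Import structures.
From mathcomp Require Import all_boot all_order all_algebra.
Set Implicit Arguments. Unset Strict Implicit. Unset Printing Implicit Defensive.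
Import GRing.Theory.
Local Open Scope ring_scope.

Definition is_ideal (R : nzRingType) (I : R -> Prop) : Prop :=
  [/\ I 0,
      (forall a b, I a -> I b -> I (a - b)),
      (forall r a, I a -> I (r * a)) &
      (forall r a, I a -> I (a * r))].

Definition prime_ideal (R : nzRingType) (I : R -> Prop) : Prop :=
  [/\ is_ideal I, ~ I 1 &
      (forall a b, (forall r, I (a * r * b)) -> I a \/ I b)].

Definition prime_radical (R : nzRingType) (a : R) : Prop :=
  forall I : R -> Prop, prime_ideal I -> I a.

Definition almost_armendariz (R : nzRingType) : Prop :=
  forall f g : {poly R}, f * g = 0 ->
    forall i j : nat, prime_radical (f`_i * g`_j).

Definition mult_closed (R : nzRingType) (S : R -> Prop) : Prop :=
  S 1 /\ (forall u v, S u -> S v -> S (u * v)).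

Definition central (R : nzRingType) (s : R) : Prop :=
  forall r : R, s * r = r * s.

Definition regular (R : nzRingType) (s : R) : Prop :=
  (forall x : R, s * x = 0 -> x = 0) /\ (forall x : R, x * s = 0 -> x = 0).

Definition two_sided_inverse (T : nzRingType) (x v : T) : Prop :=
  v * x = 1 /\ x * v = 1.

(* T (via the embedding phi) is the ring of fractions S^{-1}R:
   phi is injective, the images of S are invertible, and every element of T
   has the form u^{-1} a with u in S, a in R. *)
Definition is_localization (R T : nzRingType) (S : R -> Prop)
  (phi : {rmorphism R -> T}) : Prop :=
  [/\ injective phi,
      (forall s, S s -> exists v, two_sided_inverse (phi s) v) &
      (forall t : T, exists u a, S u /\ exists v,
          two_sided_inverse (phi u) v /\ t = v * phi a)].

From HB Require Import structures.
From mathcomp Require Import all_boot all_order all_algebra.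
Set Implicit Arguments.
Unset Strict Implicit.
Unset Printing Implicit Defensive.

Import GRing.Theory.
Local Open Scope ring_scope.

(* Since the denominators are central, polynomials over S^{-1}R can be written
   f = u^{-1} F and g = v^{-1} G with F, G over R and u, v in S, and fg = 0
   forces FG = 0; hence F_i G_j lies in P(R). The embedding R -> S^{-1}R maps
   P(R) into P(S^{-1}R): every element of S^{-1}R is w c with w central, so
   the preimage of a prime ideal is again prime. Finally
   f_i g_j = u^{-1} v^{-1} F_i G_j lies in the ideal P(S^{-1}R). *)

Lemma prime_radicalMl (R : nzRingType) (x a : R) :
  prime_radical a -> prime_radical (x * a).
Proof.
by move=> Pa I hI; case: (hI) => [[_ _ IMl _] _ _]; apply: IMl; exact: Pa.
Qed.

Section Localization.
Variables (R T : nzRingType) (S : R -> Prop) (phi : {rmorphism R -> T}).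
Hypothesis S_mult_closed : mult_closed S.
Hypothesis S_central : forall s, S s -> central s.
Hypothesis phi_localization : is_localization S phi.

Lemma denominator_central [u] : S u -> central (phi u).
Proof.
move=> Su t; case: phi_localization => _ _ /(_ t) [u' [a [Su' [w [[w1 w2] ->]]]]].
have comm_uu' : phi u * phi u' = phi u' * phi u by rewrite -!rmorphM S_central.
have comm_uw : phi u * w = w * phi u.
  by rewrite -[phi u * w]mul1r -w1 -!mulrA (mulrA (phi u')) -comm_uu'
             -(mulrA (phi u)) w2 mulr1.
by rewrite mulrA comm_uw -!mulrA -!rmorphM S_central.
Qed.

Lemma inverse_denominator_central [u w] :
  S u -> two_sided_inverse (phi u) w -> central w.
Proof.
move=> Su [w1 w2] t.
by rewrite -[w * t]mulr1 -w2 !mulrA -(mulrA w t) -(denominator_central Su t)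
           mulrA w1 mul1r.
Qed.

Lemma common_denominator n (c : nat -> T) :
  exists2 u, S u & exists b : nat -> R,
    forall i, (i < n)%N -> phi u * c i = phi (b i).
Proof.
elim: n => [|n [u Su [b hb]]].
  by exists 1; [case: S_mult_closed | exists (fun _ => 0)].
case: phi_localization => _ _ /(_ (c n)) [u' [a [Su' [w [[w1 w2] cnE]]]]].
exists (u * u'); first by case: S_mult_closed => _; apply.
exists (fun i => if i == n then u * a else u' * b i) => i.
rewrite ltnS leq_eqVlt; case: eqP => [-> _ | _ /= lt_in].
  by rewrite cnE rmorphM -mulrA (mulrA (phi u') w) w2 mul1r rmorphM.
by rewrite -(S_central Su' u) !rmorphM -mulrA hb.
Qed.

Lemma poly_common_denominator (f : {poly T}) :
  exists2 u, S u & exists F : {poly R}, map_poly phi F = (phi u)%:P * f.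
Proof.
have [u Su [b hb]] := common_denominator (size f) (fun i => f`_i).
exists u => //; exists (\poly_(i < size f) b i).
apply/polyP => i; rewrite coef_map coefCM coef_poly.
by case: ltnP => [/hb -> // | le_fi]; rewrite raddf0 nth_default ?mulr0.
Qed.

Lemma coef_cleared_poly u w (F : {poly R}) (f : {poly T}) i :
  two_sided_inverse (phi u) w -> map_poly phi F = (phi u)%:P * f ->
  f`_i = w * phi F`_i.
Proof.
move=> [w1 _] FE; have := congr1 (fun p : {poly T} => p`_i) FE.
by rewrite coef_map coefCM /= => ->; rewrite mulrA w1 mul1r.
Qed.

Lemma cleared_poly_mul_eq0 u u' (F G : {poly R}) (f g : {poly T}) :
  S u' -> map_poly phi F = (phi u)%:P * f -> map_poly phi G = (phi u')%:P * g ->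
  f * g = 0 -> F * G = 0.
Proof.
move=> Su' FE GE fg0; case: phi_localization => phi_inj _ _.
apply: (map_inj_poly phi_inj (rmorph0 phi)); rewrite rmorph0 rmorphM /= FE GE.
have comm_fu' : f * (phi u')%:P = (phi u')%:P * f.
  by apply/polyP => k; rewrite coefMC coefCM denominator_central.
by rewrite -mulrA (mulrA f) comm_fu' -mulrA fg0 !mulr0.
Qed.

Lemma preimage_prime_ideal (I : T -> Prop) :
  prime_ideal I -> prime_ideal (fun a => I (phi a)).
Proof.
case=> [[I0 IB IMl IMr] I1 Iprime]; split.
- split; first by rewrite rmorph0.
  + by move=> a b Ia Ib; rewrite rmorphB; apply: IB.
  + by move=> r a Ia; rewrite rmorphM; apply: IMl.
  + by move=> r a Ia; rewrite rmorphM; apply: IMr.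
- by rewrite rmorph1.
- move=> a b aRb; apply: Iprime => t.
  case: phi_localization => _ _ /(_ t) [u [c [Su [w [hw ->]]]]].
  rewrite mulrA -(inverse_denominator_central Su hw) -!mulrA; apply: IMl.
  by have := aRb c; rewrite !rmorphM -mulrA.
Qed.

Lemma prime_radical_map a : prime_radical a -> prime_radical (phi a).
Proof. by move=> Pa I /preimage_prime_ideal /Pa. Qed.

End Localization.

Theorem proposition2p7 (R T : nzRingType) (S : R -> Prop)
  (phi : {rmorphism R -> T}) :
  mult_closed S ->
  (forall s, S s -> central s /\ regular s) ->
  is_localization S phi ->
  almost_armendariz R ->
  almost_armendariz T.
Proof.
move=> S_mult S_central_regular phi_loc R_aa f g fg0 i j.
have S_central s : S s -> central s by case/S_central_regular.
have [u Su [F FE]] := poly_common_denominator S_mult S_central phi_loc f.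
have [u' Su' [G GE]] := poly_common_denominator S_mult S_central phi_loc g.
have FG0 := cleared_poly_mul_eq0 S_central phi_loc Su' FE GE fg0.
have [w hw] : exists w, two_sided_inverse (phi u) w by case: phi_loc => _ /(_ u Su).
have [w' hw'] : exists w', two_sided_inverse (phi u') w' by case: phi_loc => _ /(_ u' Su').
rewrite (coef_cleared_poly i hw FE) (coef_cleared_poly j hw' GE).
rewrite -mulrA (mulrA (phi F`_i)) -(inverse_denominator_central S_central phi_loc Su' hw').
rewrite -!mulrA -rmorphM; do 2 apply: prime_radicalMl.
apply: (prime_radical_map S_central phi_loc); exact: R_aa.
Qed.
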